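(* $\mathbf{K}^{\nabla\bullet}$ is sound and strongly complete with respect to the class of all frames: for every set $\Gamma\cup\{\phi\}\subseteq\mathcal{L}(\nabla,\bullet)$, $\Gamma\vdash_{\mathbf{K}^{\nabla\bullet}}\phi$ iff for every Kripke model $\mathcal{M}$ and state $s$, if $\mathcal{M},s\vDash\Gamma$ then $\mathcal{M},s\vDash\phi$.
   Context: $\mathcal{L}(\nabla,\bullet)$: $\phi::=p\mid\neg\phi\mid\phi\land\phi\mid\nabla\phi\mid\bullet\phi$ over a nonempty set $\mathbf{P}$ of propositional variables; $\Delta\phi:=\neg\nabla\phi$, $\circ\phi:=\neg\bullet\phi$. Kripke models $\langle S,R,V\rangle$ ($S\neq\emptyset$, $R\subseteq S\times S$, $V:\mathbf{P}\to\mathcal{P}(S)$): $s\vDash\nabla\phi$ iff there are $t,u$ with $sRt$, $sRu$, $t\vDash\phi$, $u\nvDash\phi$; $s\vDash\bullet\phi$ iff $s\vDash\phi$ and there is $t$ with $sRt$, $t\nvDash\phi$. The Hilbert system $\mathbf{K}^{\nabla\bullet}$ has axioms: A0 all propositional tautologies; A1 $\bullet\phi\to\phi$; A2 $\nabla\phi\leftrightarrow\nabla\neg\phi$; A3 $\bullet(\psi\to\phi)\land\phi\to\bullet\phi$; A4 $\nabla(\phi\land\psi)\to\nabla\phi\vee\nabla\psi$; A5 $\bullet(\phi\land\psi)\to\bullet\phi\vee\bullet\psi$; A6 $\nabla\phi\to\bullet\phi\vee\bullet\neg\phi$; A7 $\bullet(\phi\to\psi)\land\bullet(\neg\phi\to\chi)\to\nabla\phi$;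 rules R1 $\phi/\Delta\phi$; R2 $\phi/\circ\phi$; R3 $\phi\leftrightarrow\psi/\Delta\phi\leftrightarrow\Delta\psi$; R4 $\phi\leftrightarrow\psi/\circ\phi\leftrightarrow\circ\psi$; MP. $\Gamma\vdash\phi$ means $\vdash(\gamma_1\land\dots\land\gamma_n)\to\phi$ for some finite $\{\gamma_1,\dots,\gamma_n\}\subseteq\Gamma$. *)

From Stdlib Require Import List.
Import ListNotations.
Set Implicit Arguments.

Section Logic.
Variable P : Type.

Inductive form : Type :=
| Var : P -> form
| Neg : form -> form
| And : form -> form -> form
| Nab : form -> form
| Bul : form -> form.

Definition Delta (a : form) : form := Neg (Nab a).
Definition Circ (a : form) : form := Neg (Bul a).
Definition Imp (a b : form) : form := Neg (And a (Neg b)).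
Definition Or (a b : form) : form := Neg (And (Neg a) (Neg b)).
Definition Iff (a b : form) : form := And (Imp a b) (Imp b a).

(* Propositional tautologies: true under every Boolean assignment to the
   formulas whose main connective is not propositional (variables, nabla, bullet). *)
Fixpoint beval (v : form -> bool) (a : form) : bool :=
  match a with
  | Var _ => v a
  | Neg b => negb (beval v b)
  | And b c => andb (beval v b) (beval v c)
  | Nab _ => v a
  | Bul _ => v a
  end.

Definition tautology (a : form) : Prop := forall v : form -> bool, beval v a = true.

Inductive provable : form -> Prop :=
| A0 : forall a, tautology a -> provable a
| A1 : forall a, provable (Imp (Bul a) a)
| A2 : forall a, provable (Iff (Nab a) (Nab (Neg a)))
| A3 : forall a b, provable (Imp (And (Bul (Imp b a)) a) (Bul a))
| A4 : forall a b, provable (Imp (Nab (And a b)) (Or (Nab a) (Nab b)))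
| A5 : forall a b, provable (Imp (Bul (And a b)) (Or (Bul a) (Bul b)))
| A6 : forall a, provable (Imp (Nab a) (Or (Bul a) (Bul (Neg a))))
| A7 : forall a b c,
    provable (Imp (And (Bul (Imp a b)) (Bul (Imp (Neg a) c))) (Nab a))
| R1 : forall a, provable a -> provable (Delta a)
| R2 : forall a, provable a -> provable (Circ a)
| R3 : forall a b, provable (Iff a b) -> provable (Iff (Delta a) (Delta b))
| R4 : forall a b, provable (Iff a b) -> provable (Iff (Circ a) (Circ b))
| MP : forall a b, provable (Imp a b) -> provable a -> provable b.

Definition derives (Gamma : form -> Prop) (phi : form) : Prop :=
  exists l : list form, (forall g, In g l -> Gamma g) /\
    match l with
    | [] => provable phi
    | g :: l' => provable (Imp (fold_left And l' g) phi)
    end.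

Fixpoint sat (S : Type) (R : S -> S -> Prop) (V : P -> S -> Prop) (s : S) (a : form)
  : Prop :=
  match a with
  | Var p => V p s
  | Neg b => ~ sat R V s b
  | And b c => sat R V s b /\ sat R V s c
  | Nab b => exists t u, R s t /\ R s u /\ sat R V t b /\ ~ sat R V u b
  | Bul b => sat R V s b /\ exists t, R s t /\ ~ sat R V t b
  end.

End Logic.

(* For completeness a consistent
   set is extended to a maximal consistent one by Tukey's lemma (the set of variables may be
   uncountable), and maximal consistent sets x, y are related when y contains
     core x = { b | b in x, Bul b notin x } U { b | Neg b, Bul (Neg b) in x, Nab b notin x },
   the formulas that x forces to hold at all of its successors.  Axioms A3-A7 show that
   core x is closed under conjunction and that no consequence of core x can be accidental
   (A3, A7) or contingent (A4, A6, A7) at x; this provides the successors that witness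
   [Nab] and [Bul] in the truth lemma. *)

From Stdlib Require Import List Classical ClassicalEpsilon FunctionalExtensionality PropExtensionality.
Import ListNotations.
Set Implicit Arguments.

Ltac bool_taut :=
  let v := fresh "v" in
  intro v; intros; unfold Iff, Imp, Or, Delta, Circ in *; cbn [beval] in *;
  repeat match goal with
         | |- context [beval v ?x] => destruct (beval v x)
         | H : context [beval v ?x] |- _ => destruct (beval v x)
         | |- context [v ?x] => destruct (v x)
         | H : context [v ?x] |- _ => destruct (v x)
         end; cbn in *; congruence.

Lemma beval_imp {P : Type} (v : form P -> bool) a b :
  beval v (Imp a b) = true <-> (beval v a = true -> beval v b = true).
Proof. unfold Imp; cbn. destruct (beval v a), (beval v b); cbn; intuition congruence. Qed.

Lemma prov_bool {P : Type} (h c : form P) :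
  (forall v, beval v h = true -> beval v c = true) -> provable h -> provable c.
Proof. intros H. apply MP, A0. intro v. apply beval_imp, H. Qed.

Section Semantics.
Variables (P S : Type) (R : S -> S -> Prop) (V : P -> S -> Prop).

Lemma sat_imp s a b : sat R V s (Imp a b) <-> (sat R V s a -> sat R V s b).
Proof. cbn. split; [intros H Ha; apply NNPP|]; tauto. Qed.

Lemma sat_or s a b : sat R V s (Or a b) <-> sat R V s a \/ sat R V s b.
Proof. cbn. split; [intro H; apply NNPP|]; tauto. Qed.

Lemma sat_iff s a b : sat R V s (Iff a b) <-> (sat R V s a <-> sat R V s b).
Proof. unfold Iff. cbn [sat]. fold (Imp a b) (Imp b a). rewrite !sat_imp. tauto. Qed.

Lemma sat_tautology s a : tautology a -> sat R V s a.
Proof.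
  intro T. set (v b := if excluded_middle_informative (sat R V s b) then true else false).
  enough (E : forall b, beval v b = true <-> sat R V s b) by apply E, T.
  induction b; cbn [beval]; try (unfold v; destruct excluded_middle_informative; intuition congruence).
  - cbn [sat]. rewrite Bool.negb_true_iff, <- Bool.not_true_iff_false. tauto.
  - cbn [sat]. rewrite Bool.andb_true_iff. tauto.
Qed.

End Semantics.

Lemma soundness {P : Type} (a : form P) :
  provable a -> forall S (R : S -> S -> Prop) V s, sat R V s a.
Proof.
  induction 1; intros S R V s; rewrite ?sat_imp, ?sat_iff, ?sat_or; cbn [sat Delta Circ].
  - now apply sat_tautology.
  - tauto.
  - split; intros (t & u & Rt & Ru & Ht & Hu); exists u, t; repeat split; auto.
    now apply NNPP.
  - intros [[_ (t & Rt & Ht)] Ha]. rewrite sat_imp in Ht. split; [|exists t]; tauto.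
  - intros (t & u & Rt & Ru & [Ha Hb] & Hu).
    destruct (classic (sat R V u a)); [right | left]; exists t, u; tauto.
  - intros [[Ha Hb] (t & Rt & Ht)].
    destruct (classic (sat R V t a)); [right | left]; split; auto; exists t; tauto.
  - intros (t & u & Rt & Ru & Ht & Hu).
    destruct (classic (sat R V s a)); [left | right]; split; auto; [exists u | exists t]; tauto.
  - rewrite !sat_imp. intros [[_ (t & Rt & Ht)] [_ (u & Ru & Hu)]].
    rewrite sat_imp in Ht, Hu. exists t, u. cbn [sat] in Hu. repeat split; auto; apply NNPP; tauto.
  - intros (_ & u & _ & _ & _ & Hu). exact (Hu (IHprovable S R V u)).
  - intros [_ (t & _ & Ht)]. exact (Ht (IHprovable S R V t)).
  - assert (E : forall x, sat R V x a <-> sat R V x b) by (intro x; apply sat_iff, IHprovable).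
    setoid_rewrite E. tauto.
  - assert (E : forall x, sat R V x a <-> sat R V x b) by (intro x; apply sat_iff, IHprovable).
    setoid_rewrite E. tauto.
  - exact (proj1 (sat_imp R V s a b) (IHprovable1 S R V s) (IHprovable2 S R V s)).
Qed.

Definition subset (A : Type) (X Y : A -> Prop) := forall a, X a -> Y a.
Definition add (A : Type) (X : A -> Prop) (a : A) := fun b => X b \/ b = a.

Lemma subset_antisym (A : Type) (X Y : A -> Prop) : subset X Y -> subset Y X -> X = Y.
Proof.
  intros HXY HYX. apply functional_extensionality. intro a.
  apply propositional_extensionality. split; auto.
Qed.

Section Tukey.
Variables (A : Type) (Q : (A -> Prop) -> Prop).
Hypothesis Q_antimono : forall X Y, subset X Y -> Q Y -> Q X.
Hypothesis Q_finite : forall X, (forall l, (forall a, In a l -> X a) -> Q (fun a => In a l)) -> Q X.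
Variable X0 : A -> Prop.
Hypothesis Q_X0 : Q X0.

Definition succ (X : A -> Prop) : A -> Prop :=
  match excluded_middle_informative (exists a, ~ X a /\ Q (add X a)) with
  | left H => add X (proj1_sig (constructive_indefinite_description _ H))
  | right _ => X
  end.

Definition sup (F : (A -> Prop) -> Prop) : A -> Prop := fun a => X0 a \/ exists X, F X /\ X a.

Inductive tower : (A -> Prop) -> Prop :=
| tower_succ X : tower X -> tower (succ X)
| tower_sup F : (forall X, F X -> tower X) -> tower (sup F).

Lemma subset_succ X : subset X (succ X).
Proof. intros a H. unfold succ. destruct excluded_middle_informative; [left|]; auto. Qed.

Lemma tower_base X : tower X -> subset X0 X.
Proof. induction 1; intros a Ha; [apply subset_succ, IHtower | left]; auto. Qed.

(* Bourbaki-Witt: [c] is a pivot if [succ] cannot jump over it from below. *)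
Definition pivot c := forall x, tower x -> subset x c -> ~ subset c x -> subset (succ x) c.

Lemma pivot_split c x :
  tower c -> pivot c -> tower x -> subset x c \/ subset (succ c) x.
Proof.
  intros Tc Pc Tx. induction Tx as [x Tx IH | F TF IH].
  - destruct IH as [Hxc | Hcx].
    + destruct (classic (subset c x)) as [Hcx | Hcx].
      * right. rewrite (subset_antisym Hxc Hcx). intros a; auto.
      * left. apply Pc; auto.
    + right. intros a Ha. apply subset_succ; auto.
  - destruct (classic (exists X, F X /\ subset (succ c) X)) as [[X [FX HX]] | N].
    + right. intros a Ha. right. exists X; auto.
    + left. intros a [Ha | [X [FX Ha]]].
      * apply (tower_base Tc); auto.
      * destruct (IH X FX) as [H|H]; auto. exfalso; apply N; eauto.
Qed.

Lemma tower_pivot c : tower c -> pivot c.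
Proof.
  induction 1 as [c Tc IH | F TF IH]; intros x Tx Hxs Hsx.
  - destruct (pivot_split Tc IH Tx) as [Hxc | Hcx]; [|contradiction].
    destruct (classic (subset c x)) as [Hcx | Hcx].
    + rewrite (subset_antisym Hxc Hcx). intros a; auto.
    + intros a Ha. apply subset_succ, (IH x Tx Hxc Hcx a Ha).
  - destruct (classic (exists d, F d /\ ~ subset d x)) as [[d [Fd Hd]] | N].
    + destruct (pivot_split (TF d Fd) (IH d Fd) Tx) as [Hxd | Hdx].
      * intros a Ha. right. exists d. split; auto. exact (IH d Fd x Tx Hxd Hd a Ha).
      * exfalso. apply Hd. intros a Ha. apply Hdx, subset_succ; auto.
    + exfalso. apply Hsx. intros a [Ha | [X [FX Ha]]].
      * apply (tower_base Tx); auto.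
      * apply NNPP. intro Nx. apply N. exists X. split; auto.
Qed.

Lemma tower_chain x y : tower x -> tower y -> subset x y \/ subset y x.
Proof.
  intros Tx Ty. destruct (pivot_split Ty (tower_pivot Ty) Tx) as [H|H]; auto.
  right. intros a Ha. apply H, subset_succ; auto.
Qed.

Lemma sup_list F l : (forall X, F X -> tower X) -> (forall a, In a l -> sup F a) ->
  (forall a, In a l -> X0 a) \/ exists Y, F Y /\ forall a, In a l -> Y a.
Proof.
  intro TF. induction l as [|g l IH]; intro Hl; [left; intros a []|].
  destruct IH as [H0 | [Y [FY HY]]]; [intros a Ha; apply Hl; right; auto | |];
    destruct (Hl g (or_introl eq_refl)) as [Hg | [Z [FZ Hg]]].
  - left. intros a [<-|Ha]; auto.
  - right. exists Z. split; auto. intros a [<-|Ha]; auto. apply (tower_base (TF Z FZ)); auto.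
  - right. exists Y. split; auto. intros a [<-|Ha]; auto. apply (tower_base (TF Y FY)); auto.
  - right. destruct (tower_chain (TF Z FZ) (TF Y FY)) as [S|S];
      [exists Y | exists Z]; split; auto; intros a [<-|Ha]; auto.
Qed.

Lemma tower_Q X : tower X -> Q X.
Proof.
  induction 1 as [X Tx IH | F TF IH].
  - unfold succ. destruct excluded_middle_informative as [H|H]; auto.
    destruct (constructive_indefinite_description _ H) as [a [Na Qa]]. exact Qa.
  - apply Q_finite. intros l Hl.
    destruct (sup_list l TF Hl) as [H0 | [Y [FY HY]]];
      [apply (Q_antimono H0) | apply (Q_antimono HY), IH]; auto.
Qed.

Lemma tukey : exists M, subset X0 M /\ Q M /\ forall a, Q (add M a) -> M a.
Proof.
  set (M := sup tower).
  assert (TM : tower M) by (apply tower_sup; auto).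
  exists M. split; [intros a Ha; left; auto | split; [apply tower_Q; auto|]].
  intros a Qa. apply NNPP. intro Na.
  assert (Hsucc : subset (succ M) M)
    by (intros b Hb; right; exists (succ M); split; auto; apply tower_succ; auto).
  revert Hsucc. unfold succ. destruct excluded_middle_informative as [H|H].
  - destruct (constructive_indefinite_description _ H) as [b [Nb Qb]]. cbn.
    intro Hsucc. apply Nb, Hsucc. right; auto.
  - intros _. apply H. eauto.
Qed.

End Tukey.

Section Syntax.
Variables (P : Type) (p0 : P).

(* The language has no constants, so [Top] needs a variable: this is where [inhabited P] is used. *)
Definition Top : form P := Imp (Var p0) (Var p0).
Definition Bot : form P := Neg Top.

Fixpoint conj (l : list (form P)) : form P :=
  match l with [] => Top | a :: l => And a (conj l) end.

Definition der (X : form P -> Prop) (a : form P) :=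
  exists l, (forall g, In g l -> X g) /\ provable (Imp (conj l) a).

Definition consis (X : form P -> Prop) := ~ der X Bot.

Definition mcs (M : form P -> Prop) := consis M /\ forall a, consis (add M a) -> M a.

Lemma beval_Top (v : form P -> bool) : beval v Top = true.
Proof. cbn. destruct (v (Var p0)); reflexivity. Qed.

Lemma beval_conj (v : form P -> bool) l :
  beval v (conj l) = true <-> forall g, In g l -> beval v g = true.
Proof.
  induction l as [|a l IH]; cbn [conj beval].
  - rewrite beval_Top. firstorder.
  - rewrite Bool.andb_true_iff, IH. firstorder congruence.
Qed.

Lemma der_bool2 X a1 a2 b :
  (forall v, beval v a1 = true -> beval v a2 = true -> beval v b = true) ->
  der X a1 -> der X a2 -> der X b.
Proof.
  intros H [l1 [I1 H1]] [l2 [I2 H2]]. exists (l1 ++ l2). split.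
  - intros g Hg. apply in_app_or in Hg. destruct Hg; auto.
  - apply (MP (a := Imp (conj l2) a2)); auto. revert H1. apply prov_bool.
    intros v E1. rewrite !beval_imp, !beval_conj in *. intros E2 E3.
    apply H; [apply E1 | apply E2]; intros g Hg; apply E3, in_or_app; auto.
Qed.

Lemma der_bool X a b : (forall v, beval v a = true -> beval v b = true) -> der X a -> der X b.
Proof. intros H D. apply (der_bool2 (a1 := a) (a2 := a)); auto. Qed.

Lemma der_prov X a : provable a -> der X a.
Proof.
  intro H. exists []. split; [intros g []|]. revert H. apply prov_bool.
  intros v E. apply beval_imp. auto.
Qed.

Lemma der_in X a : X a -> der X a.
Proof.
  intro H. exists [a]. split; [intros g [<-|[]]; auto|].
  apply A0. intro v. apply beval_imp. rewrite beval_conj. intro E. apply E. left; auto.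
Qed.

Lemma deduction X a b : der (add X a) b -> der X (Imp a b).
Proof.
  intros [l [I D]].
  assert (Hsplit : exists l', (forall g, In g l' -> X g) /\ forall g, In g l -> In g l' \/ g = a).
  { clear D. induction l as [|g l IH]; [exists []; split; intros ? []|].
    destruct IH as [l' [I' H']]; [intros h Hh; apply I; right; auto|].
    destruct (I g (or_introl eq_refl)) as [Xg | ->].
    - exists (g :: l'). split; [intros h [<-|Hh]; auto|].
      intros h [<-|Hh]; [left; left|destruct (H' h Hh)]; auto. left; right; auto.
    - exists l'. split; auto. intros h [<-|Hh]; auto. }
  destruct Hsplit as [l' [I' H']]. exists l'. split; auto. revert D. apply prov_bool.
  intros v E. rewrite !beval_imp, !beval_conj in *. intros E1 E2. apply E.
  intros g Hg. destruct (H' g Hg) as [Hg' | ->]; auto.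
Qed.

Lemma consis_finite X :
  (forall l, (forall a, In a l -> X a) -> consis (fun a => In a l)) -> consis X.
Proof. intros H [l [I D]]. apply (H l I). exists l. auto. Qed.

Lemma consis_antimono X Y : subset X Y -> consis Y -> consis X.
Proof. intros HXY C [l [I D]]. apply C. exists l. auto. Qed.

Lemma lindenbaum X : consis X -> exists M, mcs M /\ subset X M.
Proof.
  intro C. destruct (tukey consis consis_antimono consis_finite X C) as [M [HXM [CM Max]]].
  exists M. repeat split; auto.
Qed.

Section MCS.
Variable M : form P -> Prop.
Hypothesis HM : mcs M.

Lemma mcs_der a : der M a -> M a.
Proof.
  intro D. destruct HM as [C Max]. apply Max. intro Da. apply C.
  revert D. apply der_bool2 with (a1 := Imp a Bot); [|now apply deduction].
  intros v E1 E2. rewrite beval_imp in E1. auto.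
Qed.

Lemma mcs_prov a : provable a -> M a.
Proof. intro. apply mcs_der, der_prov; auto. Qed.

Lemma mcs_neg a : M (Neg a) <-> ~ M a.
Proof.
  destruct HM as [C Max]. split.
  - intros H1%der_in H2%der_in. apply C. revert H1 H2. apply der_bool2.
    intros v E1 E2. cbn in E1. rewrite E2 in E1. discriminate.
  - intro N. apply mcs_der. apply NNPP. intro N2. apply N, Max. intro D.
    apply N2. apply deduction in D. revert D. apply der_bool.
    intros v E. rewrite beval_imp in E. unfold Bot in E. cbn [beval] in *.
    rewrite beval_Top in E. destruct (beval v a); cbn in *; auto.
Qed.

Lemma mcs_and a b : M (And a b) <-> M a /\ M b.
Proof.
  split.
  - intros H%der_in. split; apply mcs_der; revert H; apply der_bool;
      intros v E; cbn in E; rewrite Bool.andb_true_iff in E; tauto.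
  - intros [H1%der_in H2%der_in]. apply mcs_der. revert H1 H2. apply der_bool2.
    intros v E1 E2. cbn. rewrite E1, E2. auto.
Qed.

Lemma mcs_imp a b : M (Imp a b) <-> (M a -> M b).
Proof. unfold Imp. rewrite mcs_neg, mcs_and, mcs_neg. split; intros; [apply NNPP|]; tauto. Qed.

Lemma mcs_or a b : M (Or a b) <-> M a \/ M b.
Proof. unfold Or. rewrite mcs_neg, mcs_and, !mcs_neg. split; intros; [apply NNPP|]; tauto. Qed.

Lemma mcs_iff a b : M (Iff a b) <-> (M a <-> M b).
Proof. unfold Iff. rewrite mcs_and, !mcs_imp. tauto. Qed.

Lemma mcs_mp a b : provable (Imp a b) -> M a -> M b.
Proof. intro H. apply mcs_imp, mcs_prov, H. Qed.

Lemma mcs_A1 {a} : M (Bul a) -> M a.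
Proof. apply mcs_mp, A1. Qed.

Lemma mcs_A2 a : M (Nab a) <-> M (Nab (Neg a)).
Proof. apply mcs_iff, mcs_prov, A2. Qed.

Lemma mcs_A3 a b : M (Bul (Imp b a)) -> M a -> M (Bul a).
Proof. intros H1 H2. apply (mcs_mp (A3 a b)), mcs_and; auto. Qed.

Lemma mcs_A4 {a b} : M (Nab (And a b)) -> M (Nab a) \/ M (Nab b).
Proof. intro H. apply mcs_or, (mcs_mp (A4 a b) H). Qed.

Lemma mcs_A5 {a b} : M (Bul (And a b)) -> M (Bul a) \/ M (Bul b).
Proof. intro H. apply mcs_or, (mcs_mp (A5 a b) H). Qed.

Lemma mcs_A6 {a} : M (Nab a) -> M (Bul a) \/ M (Bul (Neg a)).
Proof. intro H. apply mcs_or, (mcs_mp (A6 a) H). Qed.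

Lemma mcs_A7 a b c : M (Bul (Imp a b)) -> M (Bul (Imp (Neg a) c)) -> M (Nab a).
Proof. intros H1 H2. apply (mcs_mp (A7 a b c)), mcs_and; auto. Qed.

Lemma mcs_not_Bul_prov a : provable a -> ~ M (Bul a).
Proof. intros H%R2%mcs_prov. apply mcs_neg, H. Qed.

Lemma mcs_Bul_congr a b : provable (Iff a b) -> (M (Bul a) <-> M (Bul b)).
Proof.
  intros H%R4%mcs_prov. unfold Circ in H. rewrite mcs_iff, !mcs_neg in H.
  split; intro X; apply NNPP; tauto.
Qed.

Lemma mcs_Nab_congr a b : provable (Iff a b) -> (M (Nab a) <-> M (Nab b)).
Proof.
  intros H%R3%mcs_prov. unfold Delta in H. rewrite mcs_iff, !mcs_neg in H.
  split; intro X; apply NNPP; tauto.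
Qed.

End MCS.
Section Core.
Variable M : form P -> Prop.
Hypothesis HM : mcs M.

Definition core (b : form P) :=
  (M b /\ ~ M (Bul b)) \/ (M (Neg b) /\ ~ M (Nab b) /\ M (Bul (Neg b))).

Lemma core_not_Bul g a : core g -> provable (Imp g a) -> M a -> ~ M (Bul a).
Proof.
  intros [[Hg Ng] | [Hg [Ng Bg]]] Hga Ha Ba.
  - apply Ng, (mcs_A3 HM g (Neg a)); auto.
    apply (mcs_Bul_congr HM (a := a)); auto. revert Hga. apply prov_bool. bool_taut.
  - apply Ng, (mcs_A7 HM g (Neg g) a).
    + apply (mcs_Bul_congr HM (a := Neg g)); auto. apply A0. bool_taut.
    + apply (mcs_Bul_congr HM (a := a)); auto. revert Hga. apply prov_bool. bool_taut.
Qed.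

Lemma core_not_Nab g a : core g -> provable (Imp g a) -> ~ M (Nab a).
Proof.
  intros Hcore Hga Na. destruct (classic (M a)) as [Ha | Ha].
  - destruct (mcs_A6 HM Na) as [B | B].
    + exact (core_not_Bul Hcore Hga Ha B).
    + exact (proj1 (mcs_neg HM a) (mcs_A1 HM B) Ha).
  - destruct Hcore as [[Hg Ng] | [Hg [Ng Bg]]]; [apply Ha, (mcs_mp HM Hga Hg)|].
    (* [a] is equivalent to [g \/ (a /\ ~ g)], and neither disjunct is contingent at [M]. *)
    assert (D : ~ M (Nab (And a (Neg g)))).
    { intro N. destruct (mcs_A6 HM N) as [B | B].
      - apply (mcs_A1 HM), (mcs_and HM) in B. tauto.
      - apply Ng, (mcs_A7 HM g (Neg g) (Neg a)).
        + apply (mcs_Bul_congr HM (a := Neg g)); auto. apply A0. bool_taut.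
        + apply (mcs_Bul_congr HM (a := Neg (And a (Neg g)))); auto. apply A0. bool_taut. }
    rewrite (mcs_Nab_congr HM (a := a) (b := Neg (And (Neg g) (Neg (And a (Neg g)))))) in Na.
    + rewrite <- (mcs_A2 HM) in Na.
      destruct (mcs_A4 HM Na) as [N | N]; rewrite <- (mcs_A2 HM) in N; auto.
    + revert Hga. apply prov_bool. bool_taut.
Qed.

Lemma core_Bul_Neg_And h k :
  core h -> M (Neg k) -> M (Bul (Neg k)) -> M (Bul (Neg (And h k))).
Proof.
  intros Hh Nk Bk.
  rewrite (mcs_Bul_congr HM (a := Neg k) (b := And (Neg (And h k)) (Or h (Neg k)))) in Bk
    by (apply A0; bool_taut).
  destruct (mcs_A5 HM Bk) as [B | B]; auto. exfalso.
  apply (core_not_Bul (a := Or h (Neg k)) Hh); auto; [apply A0; bool_taut | apply (mcs_or HM); auto].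
Qed.

Lemma core_And g h : core g -> core h -> core (And g h).
Proof.
  intros Hg Hh. destruct (classic (M g /\ M h)) as [[Mg Mh] | N].
  - left. split; [apply (mcs_and HM); auto|].
    assert (~ M (Bul g)) by (destruct Hg as [[]|[X _]]; auto; apply (mcs_neg HM) in X; tauto).
    assert (~ M (Bul h)) by (destruct Hh as [[]|[X _]]; auto; apply (mcs_neg HM) in X; tauto).
    intro B. destruct (mcs_A5 HM B); auto.
  - right. split; [|split].
    + apply (mcs_neg HM). rewrite (mcs_and HM). auto.
    + intro B. destruct (mcs_A4 HM B) as [X|X]; revert X;
        [apply (core_not_Nab (g := g)) | apply (core_not_Nab (g := h))]; auto; apply A0; bool_taut.
    + destruct (classic (M h)) as [Mh | Mh].
      * destruct Hg as [[]|[Ng [_ Bg]]]; [tauto|].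
        rewrite (mcs_Bul_congr HM (a := Neg (And g h)) (b := Neg (And h g))) by (apply A0; bool_taut).
        apply core_Bul_Neg_And; auto.
      * destruct Hh as [[]|[Nh [_ Bh]]]; [contradiction|]. apply core_Bul_Neg_And; auto.
Qed.

Lemma core_conj l : (forall g, In g l -> core g) -> core (conj l).
Proof.
  induction l as [|a l IH]; intro Hl; cbn [conj].
  - assert (T : provable Top) by (apply A0; unfold Top; bool_taut).
    left. split; [apply (mcs_prov HM T) | apply (mcs_not_Bul_prov HM T)].
  - apply core_And; [apply Hl; left|apply IH; intros g Hg; apply Hl; right]; auto.
Qed.

Lemma core_extension a : (forall g, core g -> ~ provable (Imp g a)) ->
  exists N, mcs N /\ subset core N /\ N (Neg a).
Proof.
  intro H.
  assert (C : consis (add core (Neg a))).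
  { intros D%deduction. destruct D as [l [I D]].
    apply (H (conj l)); [apply core_conj; exact I|]. revert D. apply prov_bool.
    intros v E. rewrite beval_imp in *. intro E1. specialize (E E1). rewrite beval_imp in E.
    unfold Bot in E. cbn [beval] in E. rewrite beval_Top in E. destruct (beval v a); cbn in *; auto. }
  destruct (lindenbaum C) as [N [HN HsN]]. exists N. split; [exact HN | split].
  - intros b Hb. apply HsN. left; auto.
  - apply HsN. right; auto.
Qed.

Lemma core_or_core_Neg a : ~ M (Nab a) -> core a \/ core (Neg a).
Proof.
  intro Na. destruct (classic (M a)) as [Ma | Ma].
  - destruct (classic (M (Bul a))) as [Ba | Ba]; [right; right | left; left]; auto.
    rewrite (mcs_neg HM), (mcs_neg HM), <- (mcs_A2 HM). split; [tauto | split; auto].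
    rewrite <- (mcs_Bul_congr HM (a := a)); auto. apply A0. bool_taut.
  - apply (mcs_neg HM) in Ma.
    destruct (classic (M (Bul (Neg a)))) as [Ba | Ba]; [left; right | right; left]; auto.
Qed.

End Core.

Record world := World { wset :> form P -> Prop; wmcs : mcs wset }.

Definition canon_rel (x y : world) := subset (core x) y.
Definition canon_val (p : P) (x : world) := x (Var p).

Lemma canon_Bul (x : world) a :
  x (Bul a) <-> x a /\ exists t, canon_rel x t /\ ~ t a.
Proof.
  pose proof (wmcs x) as Hx. split.
  - intro Ba. pose proof (mcs_A1 Hx Ba) as Ha. split; auto.
    destruct (core_extension Hx (a := a)) as [N [HN [HxN Na]]].
    { intros g Hg Hga. exact (core_not_Bul Hx Hg Hga Ha Ba). }
    exists (World HN). split; auto. apply (mcs_neg HN), Na.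
  - intros [Ha [t [Rt Nt]]]. apply NNPP. intro Ba. apply Nt, Rt. left; auto.
Qed.

Lemma canon_Nab (x : world) a :
  x (Nab a) <-> exists t u, canon_rel x t /\ canon_rel x u /\ t a /\ ~ u a.
Proof.
  pose proof (wmcs x) as Hx. split.
  - intro Na.
    destruct (core_extension Hx (a := Neg a)) as [T [HT [HxT Ta]]].
    { intros g Hg Hga. apply (core_not_Nab Hx Hg Hga). rewrite <- (mcs_A2 Hx). auto. }
    destruct (core_extension Hx (a := a)) as [U [HU [HxU Ua]]].
    { intros g Hg Hga. exact (core_not_Nab Hx Hg Hga Na). }
    exists (World HT), (World HU). repeat split; auto.
    + cbn. rewrite (mcs_neg HT), (mcs_neg HT) in Ta. tauto.
    + apply (mcs_neg HU), Ua.
  - intros (t & u & Rt & Ru & Ta & Ua). apply NNPP. intro Na.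
    destruct (core_or_core_Neg Hx _ Na) as [Ha | Ha].
    + apply Ua, Ru, Ha.
    + exact (proj1 (mcs_neg (wmcs t) a) (Rt _ Ha) Ta).
Qed.

Lemma canon_truth a (x : world) : sat canon_rel canon_val x a <-> x a.
Proof.
  revert x. induction a as [p | a IH | a IHa b IHb | a IH | a IH]; intro x; cbn [sat].
  - reflexivity.
  - rewrite IH, (mcs_neg (wmcs x)). reflexivity.
  - rewrite IHa, IHb, (mcs_and (wmcs x)). reflexivity.
  - rewrite canon_Nab. setoid_rewrite IH. reflexivity.
  - rewrite canon_Bul. setoid_rewrite IH. reflexivity.
Qed.

Lemma sat_conj S (R : S -> S -> Prop) V s l :
  sat R V s (conj l) <-> forall g, In g l -> sat R V s g.
Proof.
  induction l as [|a l IH]; cbn [conj sat].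
  - split; [intros _ g []|intros _; apply sat_imp; auto].
  - rewrite IH. firstorder congruence.
Qed.

Lemma strong_soundness X a : der X a ->
  forall S (R : S -> S -> Prop) V s, (forall g, X g -> sat R V s g) -> sat R V s a.
Proof.
  intros [l [I D]] S R V s HX. apply (sat_imp R V s (conj l) a); [apply soundness, D|].
  apply sat_conj. auto.
Qed.

Lemma strong_completeness X a :
  (forall S (R : S -> S -> Prop) V s, (forall g, X g -> sat R V s g) -> sat R V s a) ->
  der X a.
Proof.
  intro H. apply NNPP. intro Nd.
  assert (C : consis (add X (Neg a))).
  { intros D%deduction. apply Nd. revert D. apply der_bool.
    intros v E. rewrite beval_imp in E. unfold Bot in E. cbn [beval] in *.
    rewrite beval_Top in E. destruct (beval v a); cbn in *; auto. }
  destruct (lindenbaum C) as [M [HM HXM]].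
  assert (Ma : sat canon_rel canon_val (World HM) a).
  { apply H. intros g Hg. apply canon_truth. apply HXM. left; auto. }
  apply canon_truth in Ma. apply (mcs_neg HM a); auto. apply HXM. right; auto.
Qed.

Lemma beval_fold_left_And (v : form P -> bool) l g :
  beval v (fold_left (@And P) l g) = beval v (conj (g :: l)).
Proof.
  revert g. induction l as [|a l IH]; intro g; cbn [fold_left conj beval] in *.
  - now rewrite beval_Top, Bool.andb_true_r.
  - now rewrite IH, Bool.andb_assoc.
Qed.

Lemma derives_der X a : derives X a <-> der X a.
Proof.
  split; intros [l [I D]]; exists l; split; auto; destruct l as [|g l]; revert D; apply prov_bool.
  - intros v Ea. apply beval_imp. auto.
  - intros v E. rewrite beval_imp in *. rewrite <- beval_fold_left_And. auto.
  - intros v E. rewrite beval_imp in E. apply E, beval_Top.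
  - intros v E. rewrite beval_imp in *. rewrite beval_fold_left_And. auto.
Qed.

End Syntax.

Theorem theorem1 :
  forall (P : Type), inhabited P ->
  forall (Gamma : form P -> Prop) (phi : form P),
    derives Gamma phi <->
    (forall (S : Type) (R : S -> S -> Prop) (V : P -> S -> Prop) (s : S),
        inhabited S ->
        (forall g, Gamma g -> sat R V s g) -> sat R V s phi).
Proof.
  intros P [p0] Gamma phi. rewrite (derives_der p0). split.
  - intros D S R V s _. exact (strong_soundness D R V s).
  - intro H. apply strong_completeness. intros S R V s. apply H. exact (inhabits s).
Qed.
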